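(* Let $N=\{1,\dots,n\}$ with $n\ge 2$ and $\mathcal{D}=\mathbb{R}^n_+$. A rule $R:\mathcal{D}\to\mathbb{R}^n_+$ satisfies scale invariance, downstream impartiality, upstream invariance, and equal treatment of equal source inflows if and only if it is a compromise rule, i.e. there exists $\lambda\in[0,1]$ such that for each $e\in\mathcal{D}$, $R(e)=\lambda R^{NT}(e)+(1-\lambda)R^{EFT}(e)$.
   Context: Agents $1,\dots,n$ are located along a linear river, lower index meaning more upstream; agent $i$ has river inflow $e_i\ge 0$, and $e=(e_1,\dots,e_n)\in\mathcal{D}=\mathbb{R}^n_+$. An allocation for $e$ is $x\in\mathbb{R}^n_+$ with $\sum_{i=1}^n x_i=\sum_{i=1}^n e_i$ and $\sum_{i=1}^k x_i\le\sum_{i=1}^k e_i$ for each $k=1,\dots,n-1$. A rule is a map $R:\mathcal{D}\to\mathbb{R}^n_+$ assigning to each $e$ an allocation $R(e)$ for $e$. No-transfer rule: $R^{NT}_i(e)=e_i$ for all $i$. Egalitarian full-transfer rule: $R^{EFT}_i(e)=\sum_{j<i}\frac{e_j}{n-j}$ for $i=1,\dots,n-1$ (so $R^{EFT}_1(e)=0$), and $R^{EFT}_n(e)=\sum_{j<n}\frac{e_j}{n-j}+e_n$. For $e\in\mathcal{D}$ with $e_k>0$ for some $k\le n-1$, its source is $s(e)=\min\{k\in\{1,\dots,n-1\}:e_k>0\}$. Axioms: Scale invariance: for each $e\in\mathcal{D}$ and each $\gamma\in\mathbb{R}_+$, $R(\gamma e)=\gamma R(e)$. Upstream invariance: for each $e,e'\in\mathcal{D}$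 such that $e_i<e'_i$ for some $i\in N$ and $e_j=e'_j$ for all $j\ne i$, we have $R_k(e)=R_k(e')$ for each $k<i$. Downstream impartiality: for each $e,e'\in\mathcal{D}$ such that $e_i<e'_i$ for some $i\in N$ and $e_j=e'_j$ for all $j\ne i$, and for each $k,l>i$ with $e_k=e_l$, we have $R_k(e')-R_k(e)=R_l(e')-R_l(e)$. Equal treatment of equal source inflows: for each $e,e'\in\mathcal{D}$ (with sources defined) such that $e_{s(e)}=e'_{s(e')}$, $R_{s(e)}(e)=R_{s(e')}(e')$. *)

From HB Require Import structures.
From mathcomp Require Import all_boot all_order all_algebra.
From mathcomp Require Import reals.
Set Implicit Arguments. Unset Strict Implicit. Unset Printing Implicit Defensive.
Import Order.TTheory GRing.Theory Num.Theory.
Local Open Scope ring_scope.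

(* Agents are 'I_n; ordinal i (0-based) is agent i+1 of the paper.
   Lower index = more upstream. *)

Section River.
Variables (R : realType) (n : nat).

Definition profile := 'I_n -> R.

Definition in_D (e : profile) : Prop := forall i, 0 <= e i.

Definition allocation (e x : profile) : Prop :=
  [/\ forall i, 0 <= x i,
      \sum_(i < n) x i = \sum_(i < n) e i &
      forall k : nat, (1 <= k <= n.-1)%N ->
        \sum_(i < n | (i < k)%N) x i <= \sum_(i < n | (i < k)%N) e i].

(* A rule assigns to every e in D an allocation for e (values off D are irrelevant). *)
Definition is_rule (F : profile -> profile) : Prop :=
  forall e, in_D e -> allocation e (F e).

Definition R_NT (e : profile) : profile := fun i => e i.

(* Egalitarian full-transfer rule.  With 1-based agent j = (val j).+1,
   R_i(e) = sum_{j<i} e_j/(n-j) for i <= n-1, plus e_n for i = n. *)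
Definition R_EFT (e : profile) : profile := fun i =>
  \sum_(j < n | (j < i)%N) e j / (n - j.+1)%:R
  + (if val i == n.-1 then e i else 0).

(* k (0-based) is the source s(e): the most upstream agent among agents
   1..n-1 (0-based 0..n-2) with positive inflow. *)
Definition is_source (e : profile) (k : 'I_n) : Prop :=
  [/\ (k < n.-1)%N, 0 < e k & forall j : 'I_n, (j < k)%N -> ~ (0 < e j)].

Definition scale_invariance (F : profile -> profile) : Prop :=
  forall (e : profile) (g : R), in_D e -> 0 <= g ->
    forall i, F (fun j => g * e j) i = g * F e i.

Definition raise_at (e e' : profile) (i : 'I_n) : Prop :=
  e i < e' i /\ forall j, j != i -> e j = e' j.

Definition upstream_invariance (F : profile -> profile) : Prop :=
  forall (e e' : profile) (i : 'I_n), in_D e -> in_D e' -> raise_at e e' i ->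
    forall k : 'I_n, (k < i)%N -> F e k = F e' k.

Definition downstream_impartiality (F : profile -> profile) : Prop :=
  forall (e e' : profile) (i : 'I_n), in_D e -> in_D e' -> raise_at e e' i ->
    forall k l : 'I_n, (i < k)%N -> (i < l)%N -> e k = e l ->
      F e' k - F e k = F e' l - F e l.

Definition equal_treatment_source (F : profile -> profile) : Prop :=
  forall (e e' : profile) (k k' : 'I_n), in_D e -> in_D e' ->
    is_source e k -> is_source e' k' -> e k = e' k' -> F e k = F e' k'.

Definition compromise_rule (F : profile -> profile) : Prop :=
  exists lam : R, [/\ 0 <= lam, lam <= 1 &
    forall e, in_D e -> forall i,
      F e i = lam * R_NT e i + (1 - lam) * R_EFT e i].

End River.

(* For sufficiency let [lam] be the share
   that the first agent keeps of a unit inflow of its own; scale invariance and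
   equal treatment of sources give [F e k = lam * e k] at every source [k].
   The formula [F e i = lam * e i + (1 - lam) * R_EFT e i] is then proved by
   strong induction on [i].  By upstream invariance [e] may be replaced by the
   profile [r] that agrees with [e] upstream of [i] and equals [e i] from [i]
   on; let [s] be [r] with its upstream inflows set to 0.  Passing from [s] to
   [r] one upstream agent at a time, downstream impartiality keeps [F r - F s]
   constant on the agents from [i] on, and budget balance together with the
   induction hypothesis identifies that constant as [1 - lam] times the water
   that the equal full transfer brings to [i] from upstream.  Finally [s] has
   source [i], so [F s i = lam * e i], unless [i] is the last agent, who
   receives all of [s]. *)

From HB Require Import structures.
From mathcomp Require Import all_boot all_order all_algebra.
From mathcomp Require Import reals ring lra.
From Stdlib Require Import FunctionalExtensionality.
Set Implicit Arguments. Unset Strict Implicit. Unset Printing Implicit Defensive.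
Import Order.TTheory GRing.Theory Num.Theory.
Local Open Scope ring_scope.

Section Profiles.
Variables (R : realType) (n : nat).
Implicit Types (e : profile R n) (i j k : 'I_n).

Lemma leq_ord_last j : (j <= n.-1)%N.
Proof. by rewrite -ltnS (ltn_predK (ltn_ord j)). Qed.

Lemma sum_ord_ltS (f : 'I_n -> R) i :
  \sum_(j < n | (j < i.+1)%N) f j = \sum_(j < n | (j < i)%N) f j + f i.
Proof.
rewrite (bigD1 i) ?ltnSn //= addrC; congr (_ + _).
by apply: eq_bigl => j; rewrite ltnS leq_eqVlt -val_eqE; case: ltngtP.
Qed.

Lemma sum_ord_geq_const (m : nat) (c : R) :
  \sum_(j < n | ~~ (j < m)%N) c = (n - m)%:R * c.
Proof.
by rewrite mulr_natl -sumr_const_nat big_geq_mkord;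
  apply: eq_bigl => j; rewrite -leqNgt.
Qed.

Definition splice (m : nat) (e e' : profile R n) : profile R n :=
  fun j => if (j < m)%N then e j else e' j.

Lemma in_D_splice m e e' : in_D e -> in_D e' -> in_D (splice m e e').
Proof. by move=> De De' j; rewrite /splice; case: ifP. Qed.

Lemma splice_l m e e' : (forall j, (m <= j)%N -> e' j = e j) -> splice m e e' = e.
Proof.
move=> eq_ee'; apply: functional_extensionality => j; rewrite /splice.
by case: ltnP => // /eq_ee'.
Qed.

Lemma splice_r m e e' : (forall j, (j < m)%N -> e j = e' j) -> splice m e e' = e'.
Proof.
move=> eq_ee'; apply: functional_extensionality => j; rewrite /splice.
by case: ifP => // /eq_ee'.
Qed.

Lemma spliceS_neq (m : 'I_n) j e e' : j != m -> splice m.+1 e e' j = splice m e e' j.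
Proof. by rewrite -val_eqE /splice ltnS leq_eqVlt => /negbTE ->. Qed.

Lemma change_at_cases e e' (m : 'I_n) : (forall j, j != m -> e j = e' j) ->
  [\/ e = e', raise_at e e' m | raise_at e' e m].
Proof.
move=> eq_ee'; case: (ltgtP (e m) (e' m)) => [lt_m|gt_m|eq_m].
- by constructor 2.
- by constructor 3; split=> // j /eq_ee'.
- constructor 1; apply: functional_extensionality => j.
  by case: (eqVneq j m) => [->|/eq_ee'].
Qed.

Definition eft_upstream e (k : nat) : R :=
  \sum_(j < n | (j < k)%N) e j / (n - j.+1)%:R.

Lemma eft_upstreamS e i : eft_upstream e i.+1 = eft_upstream e i + e i / (n - i.+1)%:R.
Proof. exact: sum_ord_ltS. Qed.

Lemma eft_upstream_eq e e' (k : nat) :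
  (forall j, (j < k)%N -> e j = e' j) -> eft_upstream e k = eft_upstream e' k.
Proof. by move=> eq_ee'; apply: eq_bigr => j /eq_ee' ->. Qed.

Lemma eft_upstream0 e (k : nat) : (forall j, (j < k)%N -> e j = 0) -> eft_upstream e k = 0.
Proof. by move=> e0; rewrite /eft_upstream big1 // => j /e0 ->; rewrite mul0r. Qed.

Lemma R_EFT_upstream e i : (i < n.-1)%N -> R_EFT e i = eft_upstream e i.
Proof. by rewrite /R_EFT ltn_neqAle => /andP[/negbTE -> _]; rewrite addr0. Qed.

(* Under equal full transfer, the inflow upstream of [m] is exactly shared out:
   agent [k < m] gets [eft_upstream e k], each of the [n - m] agents from [m] on
   gets [eft_upstream e m]. *)
Lemma eft_upstream_budget e (m : nat) : (m < n)%N ->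
  \sum_(k < n | (k < m)%N) eft_upstream e k + (n - m)%:R * eft_upstream e m
  = \sum_(k < n | (k < m)%N) e k.
Proof.
elim: m => [_|m IHm lt_m1n].
  by rewrite /eft_upstream !big_pred0 // mulr0 addr0.
have lt_mn := ltnW lt_m1n; have := IHm lt_mn.
rewrite (sum_ord_ltS _ (Ordinal lt_mn)) (sum_ord_ltS e (Ordinal lt_mn)).
rewrite (eft_upstreamS e (Ordinal lt_mn)) /= -(subnSK lt_mn) -natr1.
have : (n - m.+1)%:R != 0 :> R by rewrite pnatr_eq0 -lt0n subn_gt0.
move: (n - m.+1)%:R => c nz_c <-.
rewrite mulrDr mulrCA divff // mulr1; ring.
Qed.

Definition R_compromise (lam : R) e : profile R n :=
  fun i => lam * R_NT e i + (1 - lam) * R_EFT e i.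

End Profiles.

Section CompromiseRules.
Variables (R : realType) (n : nat) (lam : R) (F : profile R n -> profile R n).
Hypothesis F_compromise : forall e, in_D e -> forall i, F e i = R_compromise lam e i.
Implicit Types (e : profile R n) (i j k : 'I_n).

Lemma compromise_scale_invariance : scale_invariance F.
Proof.
move=> e g De ge0g i.
have Dge : in_D (fun j => g * e j) by move=> j; rewrite mulr_ge0.
rewrite !F_compromise // /R_compromise /R_NT /R_EFT.
under eq_bigr do rewrite -mulrA.
rewrite -mulr_sumr; case: ifP => _; ring.
Qed.

Lemma compromise_upstream_invariance : upstream_invariance F.
Proof.
move=> e e' i De De' [_ eq_ee'] k lt_ki.
rewrite !F_compromise // /R_compromise /R_NT /R_EFT.
have ne_ki : k != i by rewrite -val_eqE neq_ltn lt_ki.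
rewrite eq_ee' //; congr (_ + _ * (_ + _)).
by apply: eq_bigr => j lt_jk; rewrite eq_ee' // -val_eqE neq_ltn (ltn_trans lt_jk lt_ki).
Qed.

Lemma compromise_gain_downstream e e' i : in_D e -> in_D e' -> raise_at e e' i ->
  forall k, (i < k)%N -> F e' k - F e k = (1 - lam) * ((e' i - e i) / (n - i.+1)%:R).
Proof.
move=> De De' [_ eq_ee'] k lt_ik.
rewrite !F_compromise // /R_compromise /R_NT /R_EFT.
have ne_ki : k != i by rewrite -val_eqE neq_ltn lt_ik orbT.
have gain : \sum_(j < n | (j < k)%N) e' j / (n - j.+1)%:R
    - \sum_(j < n | (j < k)%N) e j / (n - j.+1)%:R = (e' i - e i) / (n - i.+1)%:R.
  rewrite -sumrB (bigD1 i) //= big1 ?addr0 ?mulrBl // => j /andP[_ ne_ji].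
  by rewrite -(eq_ee' j ne_ji) subrr.
move: gain; rewrite -(eq_ee' k ne_ki); case: ifP => _ gain; rewrite -gain; ring.
Qed.

Lemma compromise_downstream_impartiality : downstream_impartiality F.
Proof.
move=> e e' i De De' raise k l lt_ik lt_il _.
by rewrite !(compromise_gain_downstream De De' raise).
Qed.

Lemma compromise_source_value e k : in_D e -> is_source e k -> F e k = lam * e k.
Proof.
move=> De [lt_k_last _ dry_upstream].
rewrite F_compromise // /R_compromise /R_NT R_EFT_upstream // eft_upstream0 ?mulr0 ?addr0 //.
move=> j lt_jk; apply/eqP; rewrite eq_le De andbT leNgt.
exact/negP/dry_upstream.
Qed.

Lemma compromise_equal_treatment_source : equal_treatment_source F.
Proof.
move=> e e' k k' De De' src src' eq_src.
by rewrite !compromise_source_value // eq_src.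
Qed.

End CompromiseRules.

Section AxiomsCharacterization.
Variables (R : realType) (n : nat) (n_ge2 : (2 <= n)%N).
Variables (F : profile R n -> profile R n) (F_rule : is_rule F).
Hypotheses (F_SI : scale_invariance F) (F_DI : downstream_impartiality F)
  (F_UI : upstream_invariance F) (F_ET : equal_treatment_source F).
Implicit Types (e : profile R n) (i j k l : 'I_n).

Lemma rule_eq_of_change_downstream e e' (m : 'I_n) : in_D e -> in_D e' ->
  (forall j, j != m -> e j = e' j) -> forall k, (k < m)%N -> F e k = F e' k.
Proof.
move=> De De' /change_at_cases[<-|raise|raise] k lt_km //.
- exact: (F_UI De De' raise).
- by rewrite (F_UI De' De raise).
Qed.

Lemma rule_gain_eq_of_change e e' (m : 'I_n) : in_D e -> in_D e' ->
  (forall j, j != m -> e j = e' j) ->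
  forall k l, (m < k)%N -> (m < l)%N -> e k = e l -> F e' k - F e k = F e' l - F e l.
Proof.
move=> De De' /change_at_cases[<-|raise|raise] k l lt_mk lt_ml eq_kl.
- by rewrite !subrr.
- by apply: (F_DI De De' raise).
- have [_ eq_e'e] := raise.
  have ne_m j : (m < j)%N -> j != m by rewrite -val_eqE neq_ltn => ->; rewrite orbT.
  have eq'_kl : e' k = e' l by rewrite !eq_e'e ?ne_m.
  have := F_DI De' De raise; move/(_ k l lt_mk lt_ml eq'_kl); lra.
Qed.

Lemma rule_eq_of_eq_upto e e' i : in_D e -> in_D e' ->
  (forall j, (j <= i)%N -> e j = e' j) -> F e i = F e' i.
Proof.
move=> De De' eq_ee'.
have F_splice m : (i < m <= n)%N -> F (splice m e e') i = F e' i.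
  elim: m => // m IHm /andP[]; rewrite ltnS leq_eqVlt => /orP[/eqP <- _|lt_im lt_mn].
    by rewrite splice_r.
  rewrite -IHm; last by rewrite lt_im ltnW.
  apply: (rule_eq_of_change_downstream (m := Ordinal lt_mn)) => //; try exact: in_D_splice.
  by move=> j; apply: (spliceS_neq (m := Ordinal lt_mn)).
have -> : e = splice n e e' by rewrite splice_l // => j; rewrite leqNgt ltn_ord.
by rewrite F_splice // ltn_ord leqnn.
Qed.

Lemma rule_gain_const_downstream e e' i : in_D e -> in_D e' ->
  (forall j, (i <= j)%N -> e' j = e j) -> (forall j, (i <= j)%N -> e j = e i) ->
  forall k, (i <= k)%N -> F e' k - F e k = F e' i - F e i.
Proof.
move=> De De' eq_ee' const_e.
have gain m : (m <= i)%N -> forall k, (i <= k)%N ->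
    F (splice m e' e) k - F e k = F (splice m e' e) i - F e i.
  elim: m => [_ k _|m IHm lt_mi k le_ik]; first by rewrite splice_r // !subrr.
  have lt_mn : (m < n)%N := ltn_trans lt_mi (ltn_ord i).
  have Dsplice p : in_D (splice p e' e) by apply: in_D_splice.
  have lt_m j : (i <= j)%N -> (m < j)%N by move/(leq_trans lt_mi).
  have eq_splice j : j != Ordinal lt_mn -> splice m e' e j = splice m.+1 e' e j.
    by move=> ne_jm; rewrite (spliceS_neq (m := Ordinal lt_mn)).
  have eq_ki : splice m e' e k = splice m e' e i.
    by rewrite /splice !ltnNge (ltnW (lt_m _ le_ik)) (ltnW lt_mi) /= const_e.
  have := rule_gain_eq_of_change (Dsplice m) (Dsplice m.+1) eq_splice
    (lt_m _ le_ik) (lt_m _ (leqnn i)) eq_ki.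
  have := IHm (ltnW lt_mi) k le_ik; lra.
have -> : e' = splice i e' e by rewrite splice_l // => j /eq_ee' ->.
exact: gain.
Qed.

Lemma rule_zero i : F (fun _ => 0) i = 0.
Proof.
have D0 : in_D (fun _ : 'I_n => 0 : R) by move=> j.
by have := F_SI D0 (lexx 0) i; rewrite mul0r => ->; rewrite mul0r.
Qed.

Definition first_agent : 'I_n := Ordinal (ltnW n_ge2).

Definition unit_first : profile R n := fun j => (val j == 0%N)%:R.

Definition lam : R := F unit_first first_agent.

Lemma in_D_unit_first : in_D unit_first.
Proof. by move=> j; rewrite ler0n. Qed.

Lemma lam_bounds : 0 <= lam <= 1.
Proof.
have [ge0 _ upstream] := F_rule in_D_unit_first.
rewrite ge0 /=; have := upstream 1%N; rewrite -subn1 subn_gt0 n_ge2 => /(_ isT).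
have first_sum (f : profile R n) : \sum_(j < n | (j < 1)%N) f j = f first_agent.
  by rewrite (sum_ord_ltS _ first_agent) big_pred0 ?add0r.
by rewrite !first_sum.
Qed.

(* Scale invariance fixes the source value on multiples of [unit_first],
   and equal treatment transports it to every source. *)
Lemma rule_source_value e k : in_D e -> is_source e k -> F e k = lam * e k.
Proof.
move=> De src_e; have [_ pos_ek _] := src_e.
pose p j := e k * unit_first j.
have Dp : in_D p by move=> j; rewrite mulr_ge0 // (ltW pos_ek).
have p_first : p first_agent = e k by rewrite /p /unit_first mulr1.
have src_p : is_source p first_agent.
  split=> [/=|//|j]; [by rewrite -subn1 subn_gt0 | by rewrite p_first | by rewrite ltn0].
rewrite (F_ET De Dp src_e src_p) ?p_first //.
by rewrite (F_SI in_D_unit_first (ltW pos_ek)) mulrC.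
Qed.

Section InductionStep.
Variable i : 'I_n.
Hypothesis IH : forall k, (k < i)%N -> forall e, in_D e -> F e k = R_compromise lam e k.

Lemma rule_upstream_value e k : in_D e -> (k < i)%N ->
  F e k = lam * e k + (1 - lam) * eft_upstream e k.
Proof.
move=> De lt_ki; rewrite IH // /R_compromise R_EFT_upstream //.
exact: leq_trans lt_ki (leq_ord_last i).
Qed.

Lemma rule_zero_upstream e k : in_D e -> (forall j, (j < i)%N -> e j = 0) ->
  (k < i)%N -> F e k = 0.
Proof.
move=> De e0 lt_ki; rewrite rule_upstream_value // e0 // eft_upstream0 ?mulr0 ?addr0 //.
by move=> j lt_jk; rewrite e0 // (ltn_trans lt_jk lt_ki).
Qed.

Lemma rule_tail_value (c : R) : 0 <= c ->
  F (splice i (fun _ => 0) (fun _ => c)) i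
  = lam * c + (1 - lam) * (if val i == n.-1 then c else 0).
Proof.
move=> ge0c; set s := splice _ _ _.
have Ds : in_D s by apply: in_D_splice.
have s0 j : (j < i)%N -> s j = 0 by rewrite /s /splice => ->.
have s_i : s i = c by rewrite /s /splice ltnn.
case: eqP => [last_i|/eqP not_last_i].
- have lt_i j : j != i -> (j < i)%N.
    by move=> ne_ji; rewrite ltn_neqAle val_eqE ne_ji /= last_i leq_ord_last.
  have [_ budget _] := F_rule Ds; move: budget.
  rewrite (bigD1 i) // [RHS](bigD1 i) //= !big1 => [|j /lt_i/s0 //|j /lt_i].
    by rewrite !addr0 s_i => ->; ring.
  exact: rule_zero_upstream.
- have lt_i_last : (i < n.-1)%N.
    by rewrite ltn_neqAle not_last_i leq_ord_last.
  have [c0|pos_c] := eqVneq c 0.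
    have -> : s = (fun _ => 0).
      by apply: functional_extensionality => j; rewrite /s /splice c0; case: ifP.
    by rewrite rule_zero c0 !mulr0 addr0.
  rewrite rule_source_value ?s_i ?mulr0 ?addr0 //.
  split=> [//||j /s0 ->]; last by rewrite ltxx.
  by rewrite s_i lt0r pos_c.
Qed.

Lemma rule_gain_of_upstream e (c : R) : in_D e -> 0 <= c ->
  F (splice i e (fun _ => c)) i - F (splice i (fun _ => 0) (fun _ => c)) i
  = (1 - lam) * eft_upstream e i.
Proof.
move=> De ge0c; set r := splice _ e _; set s := splice _ _ _; set D := _ - _.
have Dr : in_D r by apply: in_D_splice.
have Ds : in_D s by apply: in_D_splice.
have r_e j : (j < i)%N -> r j = e j by rewrite /r /splice => ->.
have s0 j : (j < i)%N -> s j = 0 by rewrite /s /splice => ->.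
have tail_eq j : ~~ (j < i)%N -> r j = s j by rewrite /r /s /splice => /negbTE ->.
have gain_downstream k : ~~ (k < i)%N -> F r k - F s k = D.
  rewrite -leqNgt; apply: rule_gain_const_downstream => // j le_ij;
    first by rewrite tail_eq // -leqNgt.
  by rewrite /s /splice ltnNge le_ij ltnn.
have gain_upstream k : (k < i)%N -> F r k - F s k = lam * e k + (1 - lam) * eft_upstream e k.
  move=> lt_ki; rewrite (rule_zero_upstream Ds s0) // subr0 rule_upstream_value // r_e //.
  by congr (_ + _ * _); apply: eft_upstream_eq => j lt_jk; rewrite r_e // (ltn_trans lt_jk lt_ki).
have [[_ sum_Fr _] [_ sum_Fs _]] := (F_rule Dr, F_rule Ds).
have split_sum (f : profile R n) :
    \sum_(k < n) f k = \sum_(k < n | (k < i)%N) f k + \sum_(k < n | ~~ (k < i)%N) f k.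
  exact: bigID.
(* Budget balance of [F r - F s], compared with [eft_upstream_budget], pins down [D]. *)
have : \sum_k (F r k - F s k) = \sum_k (r k - s k) by rewrite !sumrB sum_Fr sum_Fs.
rewrite !split_sum (eq_bigr _ gain_upstream) (eq_bigr _ gain_downstream) sum_ord_geq_const.
rewrite [X in _ = X + _](eq_bigr e) => [|k lt_ki]; last by rewrite r_e // s0 // subr0.
rewrite [X in _ = _ + X]big1 => [|k /tail_eq ->]; last exact: subrr.
rewrite big_split /= -!mulr_sumr addr0 -(eft_upstream_budget e (ltn_ord i)) => budget.
have nz : (n - i)%:R != 0 :> R by rewrite pnatr_eq0 -lt0n subn_gt0.
by apply: (mulfI nz); rewrite mulrCA; lra.
Qed.

Lemma rule_compromise_at e : in_D e -> F e i = R_compromise lam e i.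
Proof.
move=> De; have ge0ei := De i.
have -> : F e i = F (splice i e (fun _ => e i)) i.
  apply: rule_eq_of_eq_upto => // [|j]; first exact: in_D_splice.
  by rewrite /splice leq_eqVlt => /orP[/eqP/val_inj -> | ->]; rewrite ?ltnn.
rewrite -[LHS](subrK (F (splice i (fun _ => 0) (fun _ => e i)) i)).
rewrite rule_gain_of_upstream // rule_tail_value // /R_compromise /R_NT /R_EFT.
rewrite -/(eft_upstream e i); ring.
Qed.

End InductionStep.

Lemma rule_is_compromise e : in_D e -> forall i, F e i = R_compromise lam e i.
Proof.
move=> De i; have [m lt_im] := ubnP (val i).
elim: m i lt_im e De => // m IHm i lt_im e De.
apply: rule_compromise_at => // k lt_ki; apply: IHm.
exact: leq_trans lt_ki lt_im.
Qed.

End AxiomsCharacterization.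

Theorem theorem2 (R : realType) (n : nat) (hn : (2 <= n)%N)
    (F : profile R n -> profile R n) (HF : is_rule F) :
  (scale_invariance F /\ downstream_impartiality F /\
   upstream_invariance F /\ equal_treatment_source F)
  <-> compromise_rule F.
Proof.
split=> [[SI [DI [UI ET]]] | [l [_ _ F_compromise]]].
- have /andP[ge0_lam le1_lam] := lam_bounds hn HF.
  by exists (lam hn F); split=> //; apply: rule_is_compromise.
- split; first exact: compromise_scale_invariance F_compromise.
  split; first exact: compromise_downstream_impartiality F_compromise.
  split; first exact: compromise_upstream_invariance F_compromise.
  exact: compromise_equal_treatment_source F_compromise.
Qed.
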